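(* Let $R$ be a subring of $\mathbb{Q}$ and let $\Phi$ be a set of finite-rank-free-by-1 $R$-modules. Let $L$ and $G$ be torsion-free $R$-modules, both with nucleus $R$, such that $L$ is $\Phi$-complete and $G$ is $\Phi$-represented. Then $\mathrm{Ext}(G,L)=0$.
   Context: For a torsion-free group $X\neq0$, $\mathrm{nuc}\,X$ is the largest subring of $\mathbb{Q}$ over which $X$ is a module. Let $n\le\omega$. Let $B$ be the free $R$-module with basis $\{x_i:i<n\}\cup\{y_m:m\in\omega\}$, let $p_m\in R\setminus\{0\}$ and $k_{im}\in R$ with, for each $m$, $k_{im}=0$ for all but finitely many $i$, and let $N$ be the submodule generated by $y_{m+1}p_m-y_m-\sum_{i<n}x_ik_{im}$ $(m\in\omega)$. An $R$-module $G'$ is $n$-free-by-1 if $G'\cong B/N$ for such data, $G'$ is not free, and, if $n$ is finite, every $R$-submodule of $G'$ of rank $\le n$ is free; it is finite-rank-free-by-1 if it is $n$-free-by-1 for some finite $n$. $L$ is $\Phi$-complete if $\mathrm{Ext}(G',L)=0$ for all $G'\in\Phi$. $G$ is $\Phi$-represented if $G=\bigcup_{\alpha<\lambda}G_\alpha$ for an ascending continuous chain of $R$-submodules with $G_0=0$ and each $G_{\alpha+1}/G_\alpha$ isomorphic to a member of $\Phi$ or to a free $R$-module. *)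

(* Abelian groups are zmodTypes; R-modules (R a subring of Q)
   are zmodTypes with an explicit scalar action of the elements of R. *)
From HB Require Import structures.
From mathcomp Require Import all_boot all_order all_algebra.
Unset Strict Implicit. Unset Printing Implicit Defensive.
Import Order.TTheory GRing.Theory Num.Theory.
Local Open Scope ring_scope.

Definition is_subring_Q (R : rat -> Prop) : Prop :=
  R 1 /\ (forall r s, R r -> R s -> R (r - s)) /\ (forall r s, R r -> R s -> R (r * s)).

Definition is_Rmod_act (R : rat -> Prop) (M : zmodType) (act : rat -> M -> M) : Prop :=
  (forall r x y, R r -> act r (x + y) = act r x + act r y) /\
  (forall r s x, R r -> R s -> act (r + s) x = act r x + act s x) /\
  (forall r s x, R r -> R s -> act (r * s) x = act r (act s x)) /\
  (forall x, act 1 x = x).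

Record RMod (R : rat -> Prop) := {
  rm_car : zmodType;
  rm_act : rat -> rm_car -> rm_car;
  rm_ax : is_Rmod_act R rm_car rm_act }.
Arguments rm_car {R}.
Arguments rm_act {R}.

Definition torsion_free (M : zmodType) : Prop :=
  forall (x : M) (n : nat), x *+ n.+1 = 0 -> x = 0.

Definition has_nucleus (R : rat -> Prop) (M : zmodType) : Prop :=
  (exists x : M, x <> 0) /\
  (exists act : rat -> M -> M, is_Rmod_act R M act) /\
  (forall S : rat -> Prop, is_subring_Q S ->
     (exists act : rat -> M -> M, is_Rmod_act S M act) -> forall r, S r -> R r).

Definition is_submod R (M : RMod R) (S : rm_car M -> Prop) : Prop :=
  S 0 /\ (forall x y, S x -> S y -> S (x + y)) /\
  (forall r x, R r -> S x -> S (rm_act M r x)).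

Definition lincomb R (M : RMod R) (l : seq (rm_car M * rat)) : rm_car M :=
  \sum_(p <- l) rm_act M p.2 p.1.

Definition free_on R (M : RMod R) (S : rm_car M -> Prop) : Prop :=
  exists Bs : rm_car M -> Prop,
    (forall b, Bs b -> S b) /\
    (forall x, S x -> exists l : seq (rm_car M * rat),
        (forall p, p \in l -> Bs p.1 /\ R p.2) /\ x = lincomb R M l) /\
    (forall l : seq (rm_car M * rat),
        (forall p, p \in l -> Bs p.1 /\ R p.2) -> uniq (map fst l) ->
        lincomb R M l = 0 -> forall p, p \in l -> p.2 = 0).

Definition free_Rmod R (M : RMod R) : Prop := free_on R M (fun _ : rm_car M => True).

Definition rank_le R (M : RMod R) (n : nat) (S : rm_car M -> Prop) : Prop :=
  forall v : 'I_n.+1 -> rm_car M, (forall i, S (v i)) ->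
    exists c : 'I_n.+1 -> int, (exists i, c i != 0) /\ \sum_i (v i *~ c i) = 0.

(* Membership in N of the element sum_i x_i c_i + sum_j y_j d_j of B,
   N generated by y_{m+1} p_m - y_m - sum_i x_i k_{im}. *)
Definition in_N (R : rat -> Prop) (n : nat) (p : nat -> rat) (k : 'I_n -> nat -> rat)
    (c : 'I_n -> rat) (d : seq rat) : Prop :=
  exists e : seq rat, (forall m, R (nth 0 e m)) /\
    (forall i, c i = \sum_(m < size e) nth 0 e m * - k i m) /\
    (forall j : nat, nth 0 d j =
       \sum_(m < size e) nth 0 e m * ((j == m.+1)%:R * p m - (j == m)%:R)).

(* M is n-free-by-1 (n finite): M = B/N, expressed by an R-linear surjection
   B -> M (sending x_i to ex i, y_m to ey m) whose kernel is exactly N;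
   M not free; every submodule of rank <= n is free. *)
Definition n_free_by_1 R (M : RMod R) (n : nat) : Prop :=
  exists (p : nat -> rat) (k : 'I_n -> nat -> rat)
         (ex : 'I_n -> rm_car M) (ey : nat -> rm_car M),
    (forall m, R (p m) /\ p m != 0) /\ (forall i m, R (k i m)) /\
    let phi (c : 'I_n -> rat) (d : seq rat) : rm_car M :=
      \sum_i rm_act M (c i) (ex i) + \sum_(j < size d) rm_act M (nth 0 d j) (ey j) in
    (forall x : rm_car M, exists (c : 'I_n -> rat) (d : seq rat),
        (forall i, R (c i)) /\ (forall j, R (nth 0 d j)) /\ x = phi c d) /\
    (forall (c : 'I_n -> rat) (d : seq rat),
        (forall i, R (c i)) -> (forall j, R (nth 0 d j)) ->
        (phi c d = 0 <-> in_N R n p k c d)) /\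
    ~ free_Rmod R M /\
    (forall S, is_submod R M S -> rank_le R M n S -> free_on R M S).

Definition frf_by_1 R (M : RMod R) : Prop := exists n : nat, n_free_by_1 R M n.

Definition additive (A B : zmodType) (f : A -> B) : Prop :=
  forall a b, f (a + b) = f a + f b.

Definition Ext_zero (G L : zmodType) : Prop :=
  forall (X : zmodType) (i : L -> X) (pi : X -> G),
    additive L X i -> additive X G pi -> injective i -> (forall g, exists x, pi x = g) ->
    (forall x, pi x = 0 <-> exists l, i l = x) ->
    exists s : G -> X, additive G X s /\ forall g, pi (s g) = g.

Definition Phi_complete R (Phi : RMod R -> Prop) (L : RMod R) : Prop :=
  forall M, Phi M -> Ext_zero (rm_car M) (rm_car L).

Definition quot_iso R (G : RMod R) (A B : rm_car G -> Prop) (M : RMod R) : Prop :=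
  exists f : rm_car G -> rm_car M,
    (forall x y, B x -> B y -> f (x + y) = f x + f y) /\
    (forall r x, R r -> B x -> f (rm_act G r x) = rm_act M r (f x)) /\
    (forall m, exists x, B x /\ f x = m) /\
    (forall x, B x -> (f x = 0 <-> A x)).

(* G is Phi-represented: a continuous ascending chain (G_a)_{a < lambda} of
   submodules, lambda given as a well-ordered type (T, lt), G_0 = 0,
   G = union, successor quotients isomorphic to a member of Phi or free. *)
Definition Phi_represented R (Phi : RMod R -> Prop) (G : RMod R) : Prop :=
  exists (T : Type) (lt : T -> T -> Prop) (C : T -> rm_car G -> Prop),
    (forall a b c, lt a b -> lt b c -> lt a c) /\
    (forall a b, lt a b \/ a = b \/ lt b a) /\
    well_founded lt /\
    (forall a, is_submod R G (C a)) /\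
    (forall a b x, lt a b -> C a x -> C b x) /\
    (forall a, (forall b, ~ lt b a) -> forall x, C a x <-> x = 0) /\
    (forall a, (exists b, lt b a) ->
       (forall b, lt b a -> exists c, lt b c /\ lt c a) ->
       forall x, C a x <-> exists b, lt b a /\ C b x) /\
    (forall a b, lt a b -> (forall c, ~ (lt a c /\ lt c b)) ->
       exists M : RMod R, (Phi M \/ free_Rmod R M) /\ quot_iso R G (C a) (C b) M) /\
    (forall x, exists a, C a x).

(* Eklof's lemma.  Along the filtration (G_a) a section of an extension
   0 -> L -> X -> G -> 0 is built by transfinite recursion: at a limit the earlier
   sections agree and glue; at a successor a section over G_a extends to one over
   G_(a+1) because Ext(G_(a+1)/G_a, L) = 0.  For a quotient in Phi this is
   Phi-completeness; for a free quotient, each basis element b has a lift x_b, and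
   r b (r = n/d in R) is lifted to the unique y over r b with d y = n x_b, which exists
   since L is an R-module and is unique since L is torsion-free. *)

From Pilot Require Import Defs.
From HB Require Import structures.
From mathcomp Require Import all_boot all_order all_algebra.
From mathcomp Require Import ring.
From Stdlib Require Import ClassicalEpsilon FunctionalExtensionality PropExtensionality.
Set Implicit Arguments. Unset Strict Implicit. Unset Printing Implicit Defensive.
Import Order.TTheory GRing.Theory Num.Theory.
Local Open Scope ring_scope.

Definition asbool (P : Prop) : bool := if excluded_middle_informative P then true else false.

Lemma asboolP (P : Prop) : asbool P <-> P.
Proof. by rewrite /asbool; case: excluded_middle_informative. Qed.

Definition additive_on (A B : zmodType) (S : A -> Prop) (f : A -> B) : Prop :=
  forall x y, S x -> S y -> f (x + y) = f x + f y.

Definition subgroup_pred (A : zmodType) (S : A -> Prop) : Prop :=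
  S 0 /\ forall x y, S x -> S y -> S (x - y).

Section SubgroupPred.

Variables (A : zmodType) (S : A -> Prop) (hS : subgroup_pred S).

Lemma subgroup0 : S 0. Proof. by case: hS. Qed.

Lemma subgroupB x y : S x -> S y -> S (x - y). Proof. by case: hS => _; apply. Qed.

Lemma subgroupN x : S x -> S (- x).
Proof. by move=> Sx; rewrite -sub0r; apply: subgroupB subgroup0 Sx. Qed.

Lemma subgroupD x y : S x -> S y -> S (x + y).
Proof. by move=> Sx Sy; rewrite -[y]opprK; apply/subgroupB/subgroupN. Qed.

End SubgroupPred.

Section AdditiveOn.

Variables (A B : zmodType) (S : A -> Prop) (f : A -> B).
Hypotheses (hS : subgroup_pred S) (hf : additive_on S f).

Lemma additive_on0 : f 0 = 0.
Proof. by apply: (@addrI _ (f 0)); rewrite -hf ?addr0 //; apply: subgroup0. Qed.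

Lemma additive_onB x y : S x -> S y -> f (x - y) = f x - f y.
Proof.
move=> Sx Sy; have Sxy := subgroupB hS Sx Sy.
by apply/eqP; rewrite eq_sym subr_eq -hf ?subrK.
Qed.

Lemma additive_onN x : S x -> f (- x) = - f x.
Proof.
by move=> Sx; rewrite -sub0r additive_onB ?additive_on0 ?sub0r //; apply: subgroup0.
Qed.

Lemma additive_on_sum (I : Type) (r : seq I) (Q : pred I) (g : I -> A) :
  (forall i, Q i -> S (g i)) ->
  f (\sum_(i <- r | Q i) g i) = \sum_(i <- r | Q i) f (g i).
Proof.
move=> Sg; elim: r => [|x r IH]; first by rewrite !big_nil additive_on0.
rewrite !big_cons; case: ifP => Qx //; rewrite hf ?IH //; first exact: Sg.
by apply: (big_ind S); [exact: subgroup0 | exact: subgroupD | ].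
Qed.

End AdditiveOn.

Section Additive.

Variables (A B : zmodType) (f : A -> B) (hf : Defs.additive A B f).

Let hT : subgroup_pred (fun _ : A => True). Proof. by []. Qed.
Let hfT : additive_on (fun _ => True) f. Proof. by move=> x y _ _; apply: hf. Qed.

Lemma additive0 : f 0 = 0. Proof. exact: additive_on0 hT hfT. Qed.

Lemma additiveB x y : f (x - y) = f x - f y.
Proof. exact: (additive_onB hT hfT I I). Qed.

Lemma additiveN x : f (- x) = - f x.
Proof. by rewrite -sub0r additiveB additive0 sub0r. Qed.

Lemma additiveMn x n : f (x *+ n) = f x *+ n.
Proof.
elim: n => [|n IH]; first by rewrite !mulr0n additive0.
by rewrite !mulrS hf IH.
Qed.

Lemma additiveMz x (z : int) : f (x *~ z) = f x *~ z.
Proof. by case: z => n; rewrite ?NegzE ?mulrNz ?additiveN additiveMn. Qed.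

End Additive.

Section Subquotient.

Variables (X : zmodType) (D K : X -> Prop).
Hypotheses (hD : subgroup_pred D) (hK : subgroup_pred K) (KD : forall x, K x -> D x).

Let D0 := subgroup0 hD.
Let DN := subgroupN hD.
Let DD := subgroupD hD.

Definition canon (x : X) : X := epsilon (inhabits 0) (fun y => K (y - x)).

Lemma canon_spec x : K (canon x - x).
Proof.
apply: (epsilon_spec (inhabits 0) (fun y => K (y - x))).
by exists x; rewrite subrr; apply: subgroup0.
Qed.

Lemma canon_eqP x y : canon x = canon y <-> K (x - y).
Proof.
split=> [e | Kxy].
  have -> : x - y = (canon y - y) - (canon x - x) by rewrite e opprB [RHS]addrC addrA subrK.
  by apply: (subgroupB hK); apply: canon_spec.
rewrite /canon; congr epsilon; apply: functional_extensionality => z.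
apply: propositional_extensionality; split=> Kz.
  by have := subgroupD hK Kz Kxy; rewrite addrA subrK.
by have := subgroupB hK Kz Kxy; rewrite opprB addrA subrK.
Qed.

Lemma canon_id x : canon (canon x) = canon x.
Proof. by apply/canon_eqP/canon_spec. Qed.

Lemma canonDl x y : canon (canon x + y) = canon (x + y).
Proof. by apply/canon_eqP; rewrite opprD addrACA subrr addr0; apply: canon_spec. Qed.

Lemma D_canon x : D x -> D (canon x).
Proof. by move=> Dx; rewrite -(subrK x (canon x)); apply/DD/Dx/KD/canon_spec. Qed.

(* [D / K] is modelled by the chosen representatives of the cosets meeting [D]. *)
Definition subquot := {x : X | asbool (D x /\ canon x = x)}.
HB.instance Definition _ := Choice.copy subquot {x : X | asbool (D x /\ canon x = x)}.

Lemma subquot_valP (u : subquot) : D (val u) /\ canon (val u) = val u.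
Proof. by case: u => x /= /asboolP. Qed.

Definition subquot_of (x : X) : subquot :=
  insubd (exist _ (canon 0) (proj2 (asboolP _) (conj (D_canon D0) (canon_id 0)))) (canon x).

Lemma val_subquot_of x : D x -> val (subquot_of x) = canon x.
Proof.
by move=> Dx; rewrite insubdK //; apply/asboolP; split; [apply: D_canon | apply: canon_id].
Qed.

Lemma subquot_of_val u : subquot_of (val u) = u.
Proof. by have [Du cu] := subquot_valP u; apply: val_inj; rewrite val_subquot_of. Qed.

Definition subquot_add (u v : subquot) := subquot_of (val u + val v).
Definition subquot_opp (u : subquot) := subquot_of (- val u).

Lemma subquot_of_add x y : D x -> D y ->
  subquot_of (x + y) = subquot_add (subquot_of x) (subquot_of y).
Proof.
move=> Dx Dy; apply: val_inj.
have Dxy := DD Dx Dy; have Dc := DD (D_canon Dx) (D_canon Dy).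
rewrite /subquot_add !val_subquot_of //.
by rewrite (canonDl x) [x + canon y]addrC (canonDl y) addrC.
Qed.

Lemma subquot_addA : associative subquot_add.
Proof.
move=> u v w; rewrite -[u]subquot_of_val -[v]subquot_of_val -[w]subquot_of_val.
have [[Du _] [Dv _] [Dw _]] := And3 (subquot_valP u) (subquot_valP v) (subquot_valP w).
have Duv := DD Du Dv; have Dvw := DD Dv Dw.
by rewrite -!subquot_of_add // addrA.
Qed.

Lemma subquot_addC : commutative subquot_add.
Proof. by move=> u v; rewrite /subquot_add addrC. Qed.

Lemma subquot_add0 : left_id (subquot_of 0) subquot_add.
Proof.
move=> u; rewrite -[u]subquot_of_val; have [Du _] := subquot_valP u.
by rewrite -subquot_of_add // add0r.
Qed.

Lemma subquot_addN : left_inverse (subquot_of 0) subquot_opp subquot_add.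
Proof.
move=> u; have [Du _] := subquot_valP u; have DNu := DN Du.
by rewrite /subquot_opp -{2}(subquot_of_val u) -subquot_of_add // addNr.
Qed.

HB.instance Definition _ := GRing.isZmodule.Build subquot
  subquot_addA subquot_addC subquot_add0 subquot_addN.

Lemma subquotient_exists : exists (Q : zmodType) (q : X -> Q),
  additive_on D q /\ (forall u, exists x, D x /\ q x = u) /\
  (forall x y, D x -> D y -> q x = q y <-> K (x - y)).
Proof.
exists subquot, subquot_of; split; [|split].
- exact: subquot_of_add.
- by move=> u; exists (val u); split; [case: (subquot_valP u) | rewrite subquot_of_val].
- move=> x y Dx Dy; rewrite -canon_eqP -val_subquot_of // -val_subquot_of //.
  by split=> [-> | /val_inj].
Qed.

End Subquotient.

Section Subring.

Variables (R : rat -> Prop) (hR : is_subring_Q R).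

Lemma subring1 : R 1. Proof. by case: hR. Qed.

Lemma subringB r s : R r -> R s -> R (r - s). Proof. by case: hR => _ [hB _]; apply: hB. Qed.

Lemma subringM r s : R r -> R s -> R (r * s). Proof. by case: hR => _ [_ hM]; apply: hM. Qed.

Lemma subring0 : R 0. Proof. by rewrite -(subrr 1); exact: subringB subring1 subring1. Qed.

Lemma subringN r : R r -> R (- r). Proof. by rewrite -sub0r; apply: subringB subring0. Qed.

Lemma subringD r s : R r -> R s -> R (r + s).
Proof. by move=> Rr Rs; rewrite -[s]opprK; apply/subringB/subringN. Qed.

Lemma subring_int (z : int) : R z%:~R.
Proof.
have Rn (n : nat) : R n%:R.
  by elim: n => [|n IH]; [apply: subring0 | rewrite -natr1; exact: subringD IH subring1].
by case: z => n; [exact: Rn | rewrite NegzE intrN; apply/subringN/Rn].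
Qed.

Lemma subring_subgroup : subgroup_pred R.
Proof. by split; [apply: subring0 | apply: subringB]. Qed.

(* Bezout for [numq r] and [denq r] writes [1 / denq r] as [a r + c] with [a, c] integers. *)
Lemma subring_invden r : R r -> R (denq r)%:~R^-1.
Proof.
move=> Rr; have [a [c e]] := Bezoutz (numq r) (denq r).
have g1 : gcdz (numq r) (denq r) = 1 by apply/eqP; apply: coprime_num_den.
have hd : (denq r)%:~R != 0 :> rat by rewrite intr_eq0 denq_neq0.
suff -> : (denq r)%:~R^-1 = a%:~R * r + c%:~R.
  exact: subringD (subringM (subring_int a) Rr) (subring_int c).
by apply: (mulIf hd); rewrite mulVf // mulrDl -mulrA -numqE -!intrM -intrD e g1.
Qed.

End Subring.

Section Module.

Variables (R : rat -> Prop) (hR : is_subring_Q R) (M : RMod R).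

Local Notation act := (rm_act M).

Lemma actDr r x y : R r -> act r (x + y) = act r x + act r y.
Proof. by case: (rm_ax _ M) => hD _; apply: hD. Qed.

Lemma actDl r s x : R r -> R s -> act (r + s) x = act r x + act s x.
Proof. by case: (rm_ax _ M) => _ [hD _]; apply: hD. Qed.

Lemma actA r s x : R r -> R s -> act (r * s) x = act r (act s x).
Proof. by case: (rm_ax _ M) => _ [_ [hA _]]; apply: hA. Qed.

Lemma act1 x : act 1 x = x.
Proof. by case: (rm_ax _ M) => _ [_ [_ h1]]; apply: h1. Qed.

Lemma actMz r x (z : int) : R r -> act r (x *~ z) = act r x *~ z.
Proof. by move=> Rr; apply: additiveMz => y y'; apply: actDr. Qed.

Lemma act0 x : act 0 x = 0.
Proof.
have R0 := subring0 hR.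
by apply: (@addrI _ (act 0 x)); rewrite -actDl // !addr0.
Qed.

Lemma actN r x : R r -> act (- r) x = - act r x.
Proof.
move=> Rr; apply/eqP; rewrite -subr_eq0 opprK -actDl ?addNr ?act0 //.
exact: subringN.
Qed.

Lemma act_int (z : int) x : act z%:~R x = x *~ z.
Proof.
have act_nat (n : nat) : act n%:R x = x *+ n.
  elim: n => [|n IH]; first exact: act0.
  rewrite -natr1 actDl ?IH ?act1 ?mulrSr //; last exact: subring1.
  exact: (subring_int hR n).
case: z => n; first exact: act_nat.
by rewrite NegzE intrN actN ?mulrNz ?act_nat //; apply: subring_int.
Qed.

Lemma submodB (S : rm_car M -> Prop) : is_submod R M S ->
  forall x y, S x -> S y -> S (x - y).
Proof.
move=> [_ [SD SZ]] x y Sx Sy; apply: SD => //.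
have R1 := subring1 hR.
have -> : - y = act (-1) y by rewrite actN ?act1.
by apply: SZ => //; apply: subringN.
Qed.

Lemma submod_subgroup (S : rm_car M -> Prop) : is_submod R M S -> subgroup_pred S.
Proof. by move=> hS; split; [case: hS | apply: submodB]. Qed.

End Module.

Definition is_extension (L X G : zmodType) (i : L -> X) (pi : X -> G) : Prop :=
  [/\ Defs.additive L X i, Defs.additive X G pi, injective i,
      forall g, exists x, pi x = g & forall x, pi x = 0 <-> exists l, i l = x].

Lemma Ext_zeroE (L X G : zmodType) (i : L -> X) (pi : X -> G) :
  Ext_zero G L -> is_extension i pi -> exists s, Defs.additive G X s /\ cancel s pi.
Proof. by move=> hE [hi hpi iinj hsurj hker]; apply: hE. Qed.

Lemma Ext_zeroI (G L : zmodType) :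
  (forall (X : zmodType) (i : L -> X) (pi : X -> G),
     is_extension i pi -> exists s, Defs.additive G X s /\ cancel s pi) ->
  Ext_zero G L.
Proof. by move=> h X i pi hi hpi iinj hsurj hker; apply: h; split. Qed.

Definition section_on (X G : zmodType) (pi : X -> G) (S : G -> Prop) (s : G -> X) : Prop :=
  additive_on S s /\ forall g, S g -> pi (s g) = g.

Definition quotient_map (G M : zmodType) (A B : G -> Prop) (f : G -> M) : Prop :=
  [/\ additive_on B f, forall m, exists g, B g /\ f g = m & forall g, B g -> f g = 0 <-> A g].

Section ExtendSection.

Variables (L X G M : zmodType) (i : L -> X) (pi : X -> G).
Hypothesis hext : is_extension i pi.
Variables (A B : G -> Prop) (f : G -> M) (s : G -> X).
Hypotheses (hA : subgroup_pred A) (hB : subgroup_pred B) (AB : forall g, A g -> B g).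
Hypotheses (hf : quotient_map A B f) (hM : Ext_zero M L) (hs : section_on pi A s).

Let hi : Defs.additive L X i. Proof. by case: hext. Qed.
Let hpi : Defs.additive X G pi. Proof. by case: hext. Qed.
Let fadd : additive_on B f. Proof. by case: hf. Qed.
Let fker g : B g -> f g = 0 <-> A g. Proof. by case: hf => _ _; apply. Qed.
Let sadd : additive_on A s. Proof. by case: hs. Qed.
Let spi g : A g -> pi (s g) = g. Proof. by case: hs => _; apply. Qed.
Let piI l : pi (i l) = 0. Proof. by case: hext => _ _ _ _ hker; apply/hker; exists l. Qed.

(* The extension is restricted to [pi^-1 B] and divided by the image of [s] on [A]. *)
Let D x := B (pi x).
Let K x := exists2 g, A g & x = s g.

Lemma restricted_subgroup : subgroup_pred D.
Proof.
split=> [|x y]; rewrite /D ?additive0 ?additiveB //; first exact: subgroup0.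
exact: subgroupB.
Qed.

Lemma section_image_subgroup : subgroup_pred K.
Proof.
split; first by exists 0; rewrite ?(additive_on0 hA sadd) //; apply: subgroup0.
move=> _ _ [g Ag ->] [h Ah ->].
by exists (g - h); [apply: subgroupB | rewrite (additive_onB hA sadd)].
Qed.

Lemma section_image_sub x : K x -> D x.
Proof. by case=> g Ag ->; rewrite /D spi //; apply: AB. Qed.

Variables (Q : zmodType) (q : X -> Q).
Hypotheses (qadd : additive_on D q) (qsurj : forall u, exists x, D x /\ q x = u).
Hypothesis qeq : forall x y, D x -> D y -> q x = q y <-> K (x - y).

Let rep u := proj1_sig (constructive_indefinite_description _ (qsurj u)).
Let repP u : D (rep u) /\ q (rep u) = u.
Proof. exact: proj2_sig (constructive_indefinite_description _ (qsurj u)). Qed.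

Let pi' u := f (pi (rep u)).

Lemma pi'_q x : D x -> pi' (q x) = f (pi x).
Proof.
move=> Dx; have [Dr qr] := repP (q x); rewrite /pi'.
have [g Ag e] : K (rep (q x) - x) by apply/qeq.
have -> : rep (q x) = x + s g by rewrite -e addrC subrK.
by rewrite hpi fadd ?spi // ?(proj2 (fker (AB Ag)) Ag) ?addr0 //; apply: AB.
Qed.

Lemma subquotient_extension : is_extension (q \o i) pi'.
Proof.
have Di l : D (i l) by rewrite /D piI; apply: subgroup0.
split.
- by move=> a b; rewrite /= hi qadd.
- move=> u v; have [[Du <-] [Dv <-]] := conj (repP u) (repP v).
  have Duv : D (rep u + rep v) by rewrite /D hpi; apply: subgroupD.
  by rewrite -qadd // !pi'_q // hpi fadd.
- move=> a b /(qeq (Di a) (Di b)) [g Ag e].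
  have g0 : g = 0 by rewrite -(spi Ag) -e (additiveB hpi) !piI subrr.
  move: e; rewrite g0 (additive_on0 hA sadd) -(additiveB hi) -(additive0 hi).
  by case: hext => _ _ iinj _ _ /iinj /eqP; rewrite subr_eq0 => /eqP.
- move=> m; have [g [Bg <-]] : exists g, B g /\ f g = m by case: hf.
  have [x px] : exists x, pi x = g by case: hext.
  by exists (q x); rewrite pi'_q /D px.
- move=> u; split=> [f0 | [l <-]]; last first.
    by rewrite /= pi'_q // piI; apply/fker; apply: subgroup0.
  have [Du qu] := repP u; rewrite -qu pi'_q // in f0.
  have Ap : A (pi (rep u)) by apply/fker.
  have [l hl] : exists l, i l = rep u - s (pi (rep u)).
    by case: hext => _ _ _ _ hker; apply/hker; rewrite (additiveB hpi) spi ?subrr.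
  exists l; rewrite /= -qu; apply/(qeq (Di l) Du).
  exists (- pi (rep u)); first exact: subgroupN.
  by rewrite hl (additive_onN hA sadd) // addrAC subrr add0r.
Qed.

Lemma extend_section_through_subquotient :
  exists s', section_on pi B s' /\ forall g, A g -> s' g = s g.
Proof.
have [sig [sigadd sigpi]] := Ext_zeroE hM subquotient_extension.
pose t g := rep (sig (f g)).
have tD g : D (t g) by case: (repP (sig (f g))).
have tq g : q (t g) = sig (f g) by case: (repP (sig (f g))).
have tA g : B g -> A (pi (t g) - g).
  move=> Bg; apply/fker; first exact: (subgroupB hB (tD g) Bg).
  by rewrite (additive_onB hB fadd (tD g) Bg) -pi'_q // tq sigpi subrr.
exists (fun g => t g - s (pi (t g) - g)); split; [split|].
- move=> x y Bx By.
  have Dxy : D (t x + t y) by apply: (subgroupD restricted_subgroup).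
  have [k Ak ek] : K (t (x + y) - (t x + t y)).
    by apply/(qeq (tD _) Dxy); rewrite tq fadd // sigadd qadd // !tq.
  have -> : t (x + y) = t x + t y + s k by rewrite -ek [RHS]addrC subrK.
  have [Au Av] := conj (tA x Bx) (tA y By).
  have -> : pi (t x + t y + s k) - (x + y) = (pi (t x) - x) + (pi (t y) - y) + k.
    by rewrite !hpi spi // addrAC opprD addrACA.
  rewrite (sadd (subgroupD hA Au Av) Ak) (sadd Au Av).
  by rewrite opprD addrACA subrr addr0 opprD addrACA.
- by move=> g Bg; rewrite (additiveB hpi) (spi (tA g Bg)) opprB addrC subrK.
- move=> g Ag; have f0 : f g = 0 by apply/fker => //; apply: AB.
  have D0 : D 0 := subgroup0 restricted_subgroup.
  have [k Ak] : K (t g - 0).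
    apply/(qeq (tD g) D0).
    by rewrite tq f0 (additive0 sigadd) (additive_on0 restricted_subgroup qadd).
  rewrite subr0 => ->.
  by rewrite (spi Ak) (additive_onB hA sadd Ak Ag) opprB addrC subrK.
Qed.

End ExtendSection.

Lemma extend_section (L X G M : zmodType) (i : L -> X) (pi : X -> G)
    (A B : G -> Prop) (f : G -> M) (s : G -> X) :
  is_extension i pi -> subgroup_pred A -> subgroup_pred B -> (forall g, A g -> B g) ->
  quotient_map A B f -> Ext_zero M L -> section_on pi A s ->
  exists s', section_on pi B s' /\ forall g, A g -> s' g = s g.
Proof.
move=> hext hA hB AB hf hM hs.
have [Q [q [qadd [qsurj qeq]]]] := subquotient_exists (restricted_subgroup hext hB)
  (section_image_subgroup hA hs) (section_image_sub AB hs).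
exact: (extend_section_through_subquotient hext hA hB AB hf hM hs qadd qsurj qeq).
Qed.

Definition covers (T : Type) (lt : T -> T -> Prop) (b a : T) : Prop :=
  lt b a /\ forall c, ~ (lt b c /\ lt c a).

Section Eklof.

Variables (L X G : zmodType) (i : L -> X) (pi : X -> G).
Hypothesis hext : is_extension i pi.
Variables (T : Type) (lt : T -> T -> Prop) (C : T -> G -> Prop).
Hypotheses (lt_total : forall a b, lt a b \/ a = b \/ lt b a) (lt_wf : well_founded lt).
Hypotheses (C_subgroup : forall a, subgroup_pred (C a))
  (C_mono : forall a b x, lt a b -> C a x -> C b x).
Hypothesis C_min : forall a, (forall b, ~ lt b a) -> forall x, C a x <-> x = 0.
Hypothesis C_lim : forall a, (exists b, lt b a) ->
  (forall b, lt b a -> exists c, lt b c /\ lt c a) ->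
  forall x, C a x <-> exists b, lt b a /\ C b x.
Hypothesis C_succ : forall b a, covers lt b a ->
  exists (M : zmodType) (f : G -> M), quotient_map (C b) (C a) f /\ Ext_zero M L.

Local Notation cid := constructive_indefinite_description.

Lemma chain_common b b' x y : C b x -> C b' y ->
  exists m, [/\ m = b \/ m = b', C m x & C m y].
Proof.
move=> Cbx Cb'y; case: (lt_total b b') => [lbb' | [ebb' | lb'b]].
- by exists b'; split; [right | apply: C_mono lbb' Cbx |].
- by exists b; split; [left | | rewrite ebb'].
- by exists b; split; [left | | apply: C_mono lb'b Cb'y].
Qed.

Definition extend_to (b a : T) (s : G -> X) : G -> X :=
  match excluded_middle_informative
      (exists s', section_on pi (C a) s' /\ forall g, C b g -> s' g = s g) with
  | left H => proj1_sig (cid _ H)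
  | right _ => s
  end.

Definition eklof_step (a : T) (rec : forall b, lt b a -> G -> X) : G -> X :=
  match excluded_middle_informative (exists b, covers lt b a) with
  | left H => extend_to (proj1_sig (cid _ H)) a (rec _ (proj1 (proj2_sig (cid _ H))))
  | right _ => fun g =>
      match excluded_middle_informative (exists b, lt b a /\ C b g) with
      | left H => rec _ (proj1 (proj2_sig (cid _ H))) g
      | right _ => 0
      end
  end.
Arguments eklof_step : clear implicits.

Definition chain_section : T -> G -> X := Fix lt_wf (fun _ => G -> X) eklof_step.

Lemma chain_section_unfold a : chain_section a = eklof_step a (fun b _ => chain_section b).
Proof.
rewrite /chain_section Fix_eq // => x f g hfg.
have -> // : f = g.
by apply: functional_extensionality_dep => y; apply: functional_extensionality_dep.
Qed.

Definition coherent (a : T) : Prop :=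
  section_on pi (C a) (chain_section a) /\
  forall c, lt c a -> forall g, C c g -> chain_section a g = chain_section c g.

Lemma coherent_agree b b' g : coherent b -> coherent b' -> C b g -> C b' g ->
  chain_section b g = chain_section b' g.
Proof.
move=> [_ hb] [_ hb'] Cbg Cb'g.
by case: (lt_total b b') => [lbb' | [<- | lb'b]]; [rewrite (hb' b) | | rewrite (hb b')].
Qed.

Lemma coherent_succ a : (forall c, lt c a -> coherent c) -> (exists b, covers lt b a) ->
  coherent a.
Proof.
move=> IH H; rewrite /coherent chain_section_unfold /eklof_step.
case: excluded_middle_informative => [{}H | //].
case: (cid _ H) => b [lba nba] /=.
have [[sb_sec sb_agree] [M [f [hf hM]]]] := conj (IH b lba) (C_succ (conj lba nba)).
have ext : exists s', section_on pi (C a) s' /\ forall g, C b g -> s' g = chain_section b g.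
  by apply: (extend_section hext _ _ _ hf hM sb_sec) => // g; apply: C_mono.
rewrite /extend_to; case: excluded_middle_informative => [{}ext | //].
case: (cid _ ext) => s' [s'_sec s'_agree] /=; split=> // c lca g Ccg.
case: (lt_total c b) => [lcb | [ecb | lbc]]; last by case: (nba c).
- by rewrite s'_agree ?(sb_agree c) //; apply: C_mono lcb Ccg.
- by rewrite ecb in Ccg *; apply: s'_agree.
Qed.

Lemma coherent_limit a : (forall c, lt c a -> coherent c) -> ~ (exists b, covers lt b a) ->
  (exists b, lt b a) -> coherent a.
Proof.
move=> IH nsucc hpred.
have Clim : forall x, C a x <-> exists b, lt b a /\ C b x.
  apply: C_lim => // b lba; apply: NNPP => nc; apply: nsucc; exists b; split=> // c hc.
  by apply: nc; exists c.
have sect_a : forall b g, lt b a -> C b g -> chain_section a g = chain_section b g.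
  move=> b g lba Cbg; rewrite chain_section_unfold /eklof_step.
  case: excluded_middle_informative => [// | _] /=.
  case: excluded_middle_informative => [H | []]; last by exists b.
  case: (cid _ H) => b' [lb'a Cb'g] /=.
  exact: coherent_agree (IH _ lb'a) (IH _ lba) Cb'g Cbg.
split; [split|].
- move=> x y /Clim [b [lba Cbx]] /Clim [b' [lb'a Cb'y]].
  have [m [emb Cmx Cmy]] := chain_common Cbx Cb'y.
  have lma : lt m a by case: emb => ->.
  rewrite !(sect_a m) //; last exact: subgroupD.
  by case: (IH m lma) => -[madd _] _; apply: madd.
- move=> g /Clim [b [lba Cbg]]; rewrite (sect_a b) //.
  by case: (IH b lba) => -[_ bpi] _; apply: bpi.
- by move=> c lca g; apply: sect_a.
Qed.

Lemma coherent_min a : ~ (exists b, covers lt b a) -> ~ (exists b, lt b a) -> coherent a.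
Proof.
move=> nsucc npred.
have Cmin : forall x, C a x <-> x = 0 by apply: C_min => b lba; apply: npred; exists b.
have sect0 g : chain_section a g = 0.
  rewrite chain_section_unfold /eklof_step.
  case: excluded_middle_informative => [// | _] /=.
  case: excluded_middle_informative => [H | //].
  by case: npred; case: H => b [lba _]; exists b.
split; [split|].
- by move=> x y /Cmin -> /Cmin ->; rewrite !sect0 addr0.
- by move=> x /Cmin ->; rewrite sect0; case: hext => _ hpi _ _ _; apply: additive0.
- by move=> c lca; case: npred; exists c.
Qed.

Lemma chain_section_coherent a : coherent a.
Proof.
elim/(well_founded_ind lt_wf): a => a IH.
case: (excluded_middle_informative (exists b, covers lt b a)) => [hsucc | nsucc].
  exact: coherent_succ.
case: (excluded_middle_informative (exists b, lt b a)) => [hpred | npred].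
  exact: coherent_limit.
exact: coherent_min.
Qed.

Hypothesis C_cover : forall g, exists a, C a g.

Lemma chain_section_glue : exists s, Defs.additive G X s /\ cancel s pi.
Proof.
pose idx g := proj1_sig (cid _ (C_cover g)).
have Cidx g : C (idx g) g := proj2_sig (cid _ (C_cover g)).
exists (fun g => chain_section (idx g) g); split.
- move=> x y /=; have [m [_ Cmx Cmy]] := chain_common (Cidx x) (Cidx y).
  have Cmxy : C m (x + y) := subgroupD (C_subgroup m) Cmx Cmy.
  have [[madd _] _] := chain_section_coherent m.
  have agree g : C m g -> chain_section (idx g) g = chain_section m g.
    exact: coherent_agree (chain_section_coherent _) (chain_section_coherent m) (Cidx g).
  by rewrite !agree //; apply: madd.
- by move=> g /=; have [[_ idxpi] _] := chain_section_coherent (idx g); apply: idxpi.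
Qed.

End Eklof.

Definition collect (K : eqType) (l : seq (K * rat)) : seq (K * rat) :=
  [seq (b, \sum_(p <- l | p.1 == b) p.2) | b <- undup (map fst l)].

Section Collect.

Variables (K : eqType) (l : seq (K * rat)).

Lemma collect_uniq : uniq (map fst (collect l)).
Proof. by rewrite /collect -map_comp map_id_in ?undup_uniq. Qed.

Lemma mem_collect p : p \in collect l -> exists2 q, q \in l & q.1 = p.1.
Proof. by case/mapP => b; rewrite mem_undup => /mapP [q ql ->] ->; exists q. Qed.

Variable P : rat -> Prop.
Hypotheses (hP : subgroup_pred P) (lP : forall p, p \in l -> P p.2).

Lemma collect_coef p : p \in collect l -> P p.2.
Proof.
case/mapP => b _ ->; rewrite big_seq_cond.
apply: (big_ind P); [exact: subgroup0 | exact: subgroupD |].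
by move=> q /andP [ql _]; apply: lP.
Qed.

Lemma big_collect (V : zmodType) (F : K -> rat -> V) :
  (forall b, additive_on P (F b)) ->
  \sum_(p <- collect l) F p.1 p.2 = \sum_(p <- l) F p.1 p.2.
Proof.
move=> Fadd; rewrite /collect big_map.
transitivity (\sum_(b <- undup (map fst l)) \sum_(p <- l | p.1 == b) F b p.2).
  apply: eq_bigr => b _ /=; rewrite big_seq_cond (additive_on_sum hP (Fadd b) _).
    by rewrite -big_seq_cond.
  by move=> q /andP [ql _]; apply: lP.
rewrite (exchange_big_dep predT) // big_seq [RHS]big_seq; apply: eq_bigr => p pl.
rewrite (eq_bigl (pred1 p.1)) => [|b]; last by rewrite /= eq_sym.
by rewrite -big_filter filter_pred1_uniq ?undup_uniq ?mem_undup ?map_f // big_seq1.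
Qed.

End Collect.

Lemma extension_mulzI (L X G : zmodType) (i : L -> X) (pi : X -> G) :
  torsion_free L -> is_extension i pi ->
  forall (z z' : X) (d : int), 0 < d -> pi z = pi z' -> z *~ d = z' *~ d -> z = z'.
Proof.
move=> tfL [hi hpi iinj _ hker] z z' [[|n]|//] // _ e1; rewrite -!pmulrn => e2.
have [l hl] : exists l, i l = z - z' by apply/hker; rewrite (additiveB hpi) e1 subrr.
have : i (l *+ n.+1) = i 0 by rewrite (additiveMn hi) hl mulrnBl e2 subrr (additive0 hi).
by move/iinj/tfL => l0; apply/eqP; rewrite -subr_eq0 -hl l0 (additive0 hi).
Qed.

Definition on_basis (R : rat -> Prop) (V : zmodType) (Bs : V -> Prop) (l : seq (V * rat)) :=
  forall p, p \in l -> Bs p.1 /\ R p.2.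

Section FreeExtension.

Variables (R : rat -> Prop) (hR : is_subring_Q R) (M L : RMod R).
Hypothesis hLtf : torsion_free (rm_car L).
Variables (X : zmodType) (i : rm_car L -> X) (pi : X -> rm_car M).
Hypothesis hext : is_extension i pi.

Local Notation actM := (rm_act M).
Local Notation actL := (rm_act L).
Local Notation cid := constructive_indefinite_description.

Let hi : Defs.additive _ _ i. Proof. by case: hext. Qed.
Let hpi : Defs.additive _ _ pi. Proof. by case: hext. Qed.
Let pi_surj m : exists x, pi x = m. Proof. by case: hext => _ _ _ surj _; apply: surj. Qed.
Let piI l : pi (i l) = 0. Proof. by case: hext => _ _ _ _ hker; apply/hker; exists l. Qed.

Let lift m := proj1_sig (cid _ (pi_surj m)).
Let liftP m : pi (lift m) = m. Proof. exact: proj2_sig (cid _ (pi_surj m)). Qed.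

Definition scaled_lift (b : rm_car M) (r : rat) : X :=
  epsilon (inhabits 0) (fun y => pi y = actM r b /\ y *~ denq r = lift b *~ numq r).

Lemma scaled_liftP b r : R r ->
  pi (scaled_lift b r) = actM r b /\ scaled_lift b r *~ denq r = lift b *~ numq r.
Proof.
move=> Rr; apply: (epsilon_spec (inhabits 0)
  (fun y => pi y = actM r b /\ y *~ denq r = lift b *~ numq r)).
have [y0 hy0] := pi_surj (actM r b).
have Rd : R (denq r)%:~R := subring_int hR _.
have [l hl] : exists l, i l = y0 *~ denq r - lift b *~ numq r.
  case: hext => _ _ _ _ hker; apply/hker.
  rewrite (additiveB hpi) !(additiveMz hpi) hy0 liftP -actMz // -act_int //.
  by rewrite -actA // -numqE act_int // subrr.
have Rd' := subring_invden hR Rr.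
exists (y0 - i (actL (denq r)%:~R^-1 l)); split.
  by rewrite (additiveB hpi) piI subr0.
rewrite mulrzBl -(additiveMz hi) -act_int // -actA // mulfV ?intr_eq0 ?denq_neq0 //.
by rewrite act1 hl opprB addrC subrK.
Qed.

Lemma scaled_lift_additive b : additive_on R (scaled_lift b).
Proof.
move=> r s Rr Rs; have Rrs := subringD hR Rr Rs.
have mul_sl t k : R t -> scaled_lift b t *~ (denq t * k) = lift b *~ (numq t * k).
  by move=> Rt; rewrite !mulrzA (proj2 (scaled_liftP b Rt)).
apply: (extension_mulzI hLtf hext (d := denq r * denq s * denq (r + s))).
- by rewrite !mulr_gt0 ?denq_gt0.
- by rewrite hpi !(proj1 (scaled_liftP _ _)) // actDl.
have -> : denq r * denq s * denq (r + s) = denq (r + s) * (denq r * denq s) by ring.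
rewrite mul_sl // mulrzDl.
have -> : denq (r + s) * (denq r * denq s) = denq r * (denq s * denq (r + s)) by ring.
rewrite mul_sl //.
have -> : denq r * (denq s * denq (r + s)) = denq s * (denq r * denq (r + s)) by ring.
rewrite mul_sl // -mulrzDr; congr (_ *~ _).
by apply: (@intr_inj rat); rewrite !(intrD, intrM) !numqE; ring.
Qed.

Definition lift_comb (l : seq (rm_car M * rat)) : X := \sum_(p <- l) scaled_lift p.1 p.2.

Variable Bs : rm_car M -> Prop.
Hypothesis Bs_free : forall l, on_basis R Bs l -> uniq (map fst l) ->
  lincomb R M l = 0 -> forall p, p \in l -> p.2 = 0.

Lemma lift_comb_eq0 l : on_basis R Bs l -> lincomb R M l = 0 -> lift_comb l = 0.
Proof.
move=> lB l0; have lR p : p \in l -> R p.2 by case/lB.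
have hR' := subring_subgroup hR.
have cB : on_basis R Bs (collect l).
  move=> p pl; have [q ql <-] := mem_collect pl.
  by split; [case: (lB q ql) | apply: collect_coef pl].
have c0 : lincomb R M (collect l) = 0.
  rewrite -l0; apply: (big_collect (F := fun b r => actM r b) hR' lR) => b r s Rr Rs.
  exact: actDl.
rewrite /lift_comb -(big_collect hR' lR) ?big_seq ?big1 // => [p pl | b].
  by rewrite (Bs_free cB (collect_uniq l) c0 pl) (additive_on0 hR' (scaled_lift_additive _)).
exact: scaled_lift_additive.
Qed.

Lemma pi_lift_comb l : on_basis R Bs l -> pi (lift_comb l) = lincomb R M l.
Proof.
move=> lB; rewrite /lift_comb (big_morph pi hpi (additive0 hpi)) big_seq [RHS]big_seq.
by apply: eq_bigr => p pl; case: (scaled_liftP p.1 (proj2 (lB p pl))).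
Qed.

Lemma lift_comb_eq l l' : on_basis R Bs l -> on_basis R Bs l' ->
  lincomb R M l = lincomb R M l' -> lift_comb l = lift_comb l'.
Proof.
move=> lB l'B e; pose l'N := [seq (p.1, - p.2) | p <- l'].
have l'NB : on_basis R Bs l'N.
  by move=> _ /mapP [p pl' ->]; case: (l'B p pl') => Bp Rp; split=> //; apply: subringN.
have sumN (V : zmodType) (F : rm_car M -> rat -> V) :
    (forall b r, R r -> F b (- r) = - F b r) ->
    \sum_(p <- l'N) F p.1 p.2 = - \sum_(p <- l') F p.1 p.2.
  move=> FN; rewrite big_map -sumrN big_seq [RHS]big_seq; apply: eq_bigr => p pl'.
  by apply: FN; case: (l'B p pl').
apply/eqP; rewrite -subr_eq0; apply/eqP.
have slN b r : R r -> scaled_lift b (- r) = - scaled_lift b r.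
  by move=> Rr; have := additive_onN (subring_subgroup hR) (scaled_lift_additive b) Rr.
rewrite /lift_comb -(sumN _ _ slN) -big_cat; apply: lift_comb_eq0.
  by move=> p; rewrite mem_cat => /orP [/lB | /l'NB].
rewrite /lincomb big_cat (sumN _ (fun b r => actM r b) (fun b r Rr => actN hR b Rr)).
by apply/eqP; rewrite subr_eq0 -/(lincomb R M l) -/(lincomb R M l') e.
Qed.

Hypothesis Bs_span : forall x, exists l, on_basis R Bs l /\ x = lincomb R M l.

Lemma free_extension_splits : exists s, Defs.additive _ _ s /\ cancel s pi.
Proof.
pose coords x := proj1_sig (cid _ (Bs_span x)).
have coordsP x : on_basis R Bs (coords x) /\ x = lincomb R M (coords x).
  exact: proj2_sig (cid _ (Bs_span x)).
exists (fun x => lift_comb (coords x)); split=> [x y | x] /=; last first.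
  by case: (coordsP x) => xB ex; rewrite pi_lift_comb.
have [[xB ex] [yB ey] [xyB exy]] := And3 (coordsP x) (coordsP y) (coordsP (x + y)).
have catB : on_basis R Bs (coords x ++ coords y).
  by move=> p; rewrite mem_cat => /orP [/xB | /yB].
rewrite (lift_comb_eq xyB catB); first by rewrite /lift_comb big_cat.
by rewrite -exy [in LHS]ex [in LHS]ey /lincomb big_cat.
Qed.

End FreeExtension.

Lemma free_Ext_zero (R : rat -> Prop) (M L : RMod R) :
  is_subring_Q R -> torsion_free (rm_car L) -> free_Rmod R M -> Ext_zero (rm_car M) (rm_car L).
Proof.
move=> hR hLtf [Bs [_ [Bs_span Bs_free]]]; apply: Ext_zeroI => X i pi hext.
by apply: (free_extension_splits hR hLtf hext Bs_free) => x; apply: Bs_span.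
Qed.

Lemma eklof (L G : zmodType) (T : Type) (lt : T -> T -> Prop) (C : T -> G -> Prop) :
  (forall a b, lt a b \/ a = b \/ lt b a) -> well_founded lt ->
  (forall a, subgroup_pred (C a)) -> (forall a b x, lt a b -> C a x -> C b x) ->
  (forall a, (forall b, ~ lt b a) -> forall x, C a x <-> x = 0) ->
  (forall a, (exists b, lt b a) -> (forall b, lt b a -> exists c, lt b c /\ lt c a) ->
     forall x, C a x <-> exists b, lt b a /\ C b x) ->
  (forall b a, covers lt b a ->
     exists (M : zmodType) (f : G -> M), quotient_map (C b) (C a) f /\ Ext_zero M L) ->
  (forall g, exists a, C a g) ->
  Ext_zero G L.
Proof.
move=> lt_total lt_wf C_subgroup C_mono C_min C_lim C_succ C_cover.
apply: Ext_zeroI => X i pi hext.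
exact: (chain_section_glue hext lt_total lt_wf C_subgroup C_mono C_min C_lim C_succ C_cover).
Qed.

Lemma quot_iso_quotient_map (R : rat -> Prop) (G M : RMod R) (A B : rm_car G -> Prop) :
  quot_iso R G A B M -> exists f : rm_car G -> rm_car M, quotient_map A B f.
Proof. by case=> f [fadd [_ [fsurj fker]]]; exists f; split. Qed.

Theorem theorem5p2 (R : rat -> Prop) (hR : is_subring_Q R)
  (Phi : RMod R -> Prop) (hPhi : forall M, Phi M -> frf_by_1 R M)
  (L G : RMod R)
  (hLtf : torsion_free (rm_car L)) (hGtf : torsion_free (rm_car G))
  (hLnuc : has_nucleus R (rm_car L)) (hGnuc : has_nucleus R (rm_car G))
  (hL : Phi_complete R Phi L) (hG : Phi_represented R Phi G) :
  Ext_zero (rm_car G) (rm_car L).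
Proof.
case: hG => T [lt [C [_ [lt_total [lt_wf [C_sub [C_mono [C_min [C_lim [C_succ C_cover]]]]]]]]]].
apply: (eklof lt_total lt_wf _ C_mono C_min C_lim _ C_cover).
  by move=> a; have := submod_subgroup hR (C_sub a); apply.
move=> b a [lba nba]; have [M [hM hq]] := C_succ b a lba nba.
have [f hf] := quot_iso_quotient_map hq.
exists (rm_car M), f; split=> //.
by case: hM => [/hL | /(free_Ext_zero hR hLtf)].
Qed.
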